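(* Let $M\ge 1$, $H\ge1$, $[M]=\{0,\dots,M-1\}$, and fix a message $s_{1:H}\in[M]^H$. Let $T\ge1$ and let $\mathbf z=(z_1,\dots,z_T)$ be a realized sequence of step seeds; let $\mathcal Z_T$ be the set of distinct values among $z_1,\dots,z_T$, and for $z\in\mathcal Z_T$ let $n_z=|\{t\in\{1,\dots,T\}: z_t=z\}|$, $S_T=\sum_{z\in\mathcal Z_T}n_z^2$ and $T_{\mathrm{eff}}=T^2/S_T$. To each distinct seed $z$ is associated a random pair $(i_z,\phi_z)$ with $i_z\in\{1,\dots,H\}$ and $\phi_z$ a permutation of $[M]$; at step $t$ the target bin is $r_t^\star=\phi_{z_t}(s_{i_{z_t}})$. Assume that, conditional on $\mathbf z$, the pairs $\{(i_z,\phi_z)\}_{z\in\mathcal Z_T}$ are independent across distinct seeds, and each $\phi_z$ is a uniformly random permutation of $[M]$ independent of $i_z$. Define $\hat\pi_T(r)=\frac1T\sum_{t=1}^T\mathbf 1\{r_t^\star=r\}$ for $r\in[M]$. Then for every $r\in[M]$, $$\mathbb E\big[\hat\pi_T(r)\mid \mathbf z\big]=\frac1M,$$ and for every $\epsilon>0$, $$\mathbb P\Big(\Big|\hat\pi_T(r)-\frac1M\Big|\ge\epsilon\ \Big|\ \mathbf z\Big)\le 2\exp\!\Big(-\frac{2\epsilon^2T^2}{S_T}\Big)=2\exp\!\big(-2\epsilon^2T_{\mathrm{eff}}\big).$$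
   Context: This models the QuantileMark watermark, in which at each step $t$ a position index $i_t$ (which message symbol to embed) and a permutation $\phi_t$ of $[M]$ (mapping symbols to quantile-bin indices) are derived by a pseudorandom function from a secret key and a step seed $z_t$ (a hash of the local context); repeated seeds reuse the same pair. $\hat\pi_T$ is the empirical occupancy of target bins over $T$ steps. *)

From HB Require Import structures.
From mathcomp Require Import all_boot all_order all_algebra all_fingroup.
From mathcomp Require Import reals sequences exp.
Set Implicit Arguments. Unset Strict Implicit. Unset Printing Implicit Defensive.
Import Order.TTheory GRing.Theory Num.Theory.
Local Open Scope ring_scope.

(* A finite probability space: a mass function P on a finite sample space
   Omega (everything below is conditional on the realized seed sequence zs). *)
Definition is_pmf (R : realType) (Omega : finType) (P : Omega -> R) : Prop :=
  (forall w, 0 <= P w) /\ \sum_(w : Omega) P w = 1.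

Definition Prob (R : realType) (Omega : finType) (P : Omega -> R)
  (A : pred Omega) : R := \sum_(w : Omega | A w) P w.

Definition Expect (R : realType) (Omega : finType) (P : Omega -> R)
  (X : Omega -> R) : R := \sum_(w : Omega) P w * X w.

Definition distinct_seeds (Z : eqType) (T : nat) (zs : 'I_T -> Z) : seq Z :=
  undup [seq zs t | t <- enum 'I_T].

Definition nseed (Z : eqType) (T : nat) (zs : 'I_T -> Z) (z : Z) : nat :=
  #|[set t : 'I_T | zs t == z]|.

Definition S_T (Z : eqType) (T : nat) (zs : 'I_T -> Z) : nat :=
  (\sum_(z <- distinct_seeds zs) (nseed zs z) ^ 2)%N.

Definition T_eff (R : realType) (Z : eqType) (T : nat) (zs : 'I_T -> Z) : R :=
  (T%:R ^+ 2) / (S_T zs)%:R.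

Definition target_bin (Omega : finType) (Z : eqType) (T M H : nat)
  (zs : 'I_T -> Z) (s : 'I_H -> 'I_M)
  (i : Z -> Omega -> 'I_H) (phi : Z -> Omega -> {perm 'I_M})
  (t : 'I_T) (w : Omega) : 'I_M :=
  phi (zs t) w (s (i (zs t) w)).

Definition pihat (R : realType) (Omega : finType) (Z : eqType) (T M H : nat)
  (zs : 'I_T -> Z) (s : 'I_H -> 'I_M)
  (i : Z -> Omega -> 'I_H) (phi : Z -> Omega -> {perm 'I_M})
  (r : 'I_M) (w : Omega) : R :=
  (\sum_(t : 'I_T) ((target_bin zs s i phi t w == r) : nat)%:R) / T%:R.

(* Grouping the steps by seed, pihat_T(r) - 1/M = sum_z (n_z/T) (1{phi_z(s_{i_z}) = r} - 1/M),
   a weighted sum of centred indicators, one per distinct seed.  These are independent, and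
   each has mean 1/M because a uniform permutation sends any fixed symbol to r with
   probability 1/M; this gives the expectation.  By Hoeffding's lemma each summand has
   moment generating function at most exp(h^2 (n_z/T)^2 / 8), so the sum is sub-Gaussian
   with variance proxy sum_z (n_z/T)^2 = S_T/T^2, and the Chernoff bound applied to both
   tails gives 2 exp(-2 eps^2 T^2 / S_T). *)

From HB Require Import structures.
From mathcomp Require Import all_boot all_order all_algebra all_fingroup.
From mathcomp Require Import reals sequences exp.
From mathcomp Require Import topology normedtype derive realfun.
From mathcomp Require Import ring lra.
Import Order.TTheory GRing.Theory Num.Theory numFieldNormedType.Exports.
Set Implicit Arguments. Unset Strict Implicit. Unset Printing Implicit Defensive.
Local Open Scope ring_scope.

Lemma ger0_is_derive_le (R : realType) (f df : R -> R) (a b : R) :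
  (forall x : R, is_derive x 1 f (df x)) -> (forall x, a <= x <= b -> 0 <= df x) ->
  a <= b -> f a <= f b.
Proof.
move=> fdf df_ge0 ab.
have [|c] := MVT_segment ab (fun x _ => fdf x).
  apply/continuous_subspaceT => x; apply/differentiable_continuous.
  by apply/derivable1_diffP; case: (fdf x).
by rewrite in_itv /= => /df_ge0 dfc_ge0 fba; rewrite -subr_ge0 fba mulr_ge0 ?subr_ge0.
Qed.

(* F h <= 1 = F 0 because F' = - exp(- p h - h^2/8) D G, where G' = (q - 1/2)^2 >= 0 and
   G 0 = 0, so F increases on h <= 0 and decreases on h >= 0. *)
Section HoeffdingBernoulli.
Variables (R : realType) (p : R).
Hypothesis p01 : 0 <= p <= 1.

Let D (h : R) : R := 1 - p + p * expR h.
Let q (h : R) : R := p * expR h / D h.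
Let G (h : R) : R := p + 4^-1 * h - q h.
Let F (h : R) : R := D h * expR (- (p * h) - 8^-1 * h ^+ 2).

Let D_gt0 h : 0 < D h.
Proof.
rewrite /D; have [->|p_neq0] := eqVneq p 0; first by rewrite subr0 mul0r addr0.
have [p0 p1] := andP p01.
have : 0 < p * expR h by rewrite mulr_gt0 ?expR_gt0 // lt_def p_neq0.
lra.
Qed.

Let D_neq0 h : D h != 0.
Proof. by rewrite gt_eqF ?D_gt0. Qed.

Let is_derive_D (x : R) : is_derive x 1 D (p * expR x).
Proof.
have := is_deriveD (is_derive_cst (1 - p) x 1) (is_deriveZ p (is_derive_expR x)).
by rewrite add0r.
Qed.

Let is_derive_q (x : R) : is_derive x 1 q (q x * (1 - q x)).
Proof.
have dq : is_derive x 1 q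
    (p * expR x * (- D x ^- 2 * (p * expR x)) + (D x)^-1 * (p * expR x)).
  exact: is_deriveM (is_deriveZ p (is_derive_expR x))
                    (is_deriveV (D_neq0 x) (is_derive_D x)).
by apply: is_derive_eq dq _; rewrite /q; have Dx_neq0 := D_neq0 x; field.
Qed.

Let G_nondecreasing x y : x <= y -> G x <= G y.
Proof.
apply: (ger0_is_derive_le (df := fun x => (q x - 2^-1) ^+ 2)) => [z|z _]; last first.
  exact: sqr_ge0.
have dG : is_derive z 1 G (0 + 4^-1 * 1 - q z * (1 - q z)).
  exact: is_deriveB (is_deriveD (is_derive_cst p z 1) (is_deriveZ (4^-1) (is_derive_id z 1)))
                    (is_derive_q z).
by apply: is_derive_eq dG _; field.
Qed.

Let G0 : G 0 = 0.
Proof. by rewrite /G /q /D expR0 mulr1 subrK divr1 mulr0 addr0 subrr. Qed.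

Let is_derive_F (x : R) :
  is_derive x 1 F (- (expR (- (p * x) - 8^-1 * x ^+ 2) * D x * G x)).
Proof.
set e := expR _.
have de : is_derive x 1 (fun h => expR (- (p * h) - 8^-1 * h ^+ 2))
    (e * (- (p * 1) - 8^-1 * (2 * x * 1))).
  exact: is_derive1_comp (is_derive_expR _)
    (is_deriveB (is_deriveN (is_deriveZ p (is_derive_id x 1)))
                (is_deriveZ (8^-1) (is_deriveX 2 (is_derive_id x 1)))).
have dF : is_derive x 1 F
    (D x * (e * (- (p * 1) - 8^-1 * (2 * x * 1))) + e * (p * expR x)).
  exact: is_deriveM (is_derive_D x) de.
apply: is_derive_eq dF _; rewrite /G /q.
by have Dx_neq0 := D_neq0 x; field.
Qed.

Let F_le1 h : F h <= 1.
Proof.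
have <- : F 0 = 1.
  by rewrite /F /D expR0 mulr1 subrK mul1r expr2 !mulr0 oppr0 addr0 expR0.
have eD_gt0 x : 0 < expR (- (p * x) - 8^-1 * x ^+ 2) * D x by rewrite mulr_gt0 ?expR_gt0.
have [h_le0|h_gt0] := leP h 0.
  apply: ger0_is_derive_le is_derive_F _ h_le0 => x /andP[_ x_le0].
  by rewrite oppr_ge0 pmulr_rle0 // -G0 G_nondecreasing.
rewrite -lerN2; apply: (ger0_is_derive_le (fun x => is_deriveN (is_derive_F x))) (ltW h_gt0).
by move=> x /andP[x_ge0 _]; rewrite opprK pmulr_rge0 // -G0 G_nondecreasing.
Qed.

Lemma hoeffding_bernoulli (h : R) :
  (1 - p) * expR (- (h * p)) + p * expR (h * (1 - p)) <= expR (h ^+ 2 / 8).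
Proof.
have -> : (1 - p) * expR (- (h * p)) + p * expR (h * (1 - p)) =
          F h * expR (h ^+ 2 / 8).
  rewrite /F /D -mulrA -expRD.
  rewrite (_ : - (p * h) - 8^-1 * h ^+ 2 + h ^+ 2 / 8 = - (h * p)); last by ring.
  by rewrite (_ : h * (1 - p) = h + - (h * p)) ?expRD; ring.
by rewrite ler_piMl ?expR_ge0 ?F_le1.
Qed.

End HoeffdingBernoulli.

Section FiniteProbability.
Variables (R : realType) (Omega : finType) (P : Omega -> R).

Lemma Expect_indicator (A : pred Omega) : Expect P (fun w => (A w)%:R) = Prob P A.
Proof.
rewrite /Prob big_mkcond /Expect; apply: eq_bigr => w _.
by case: (A w); rewrite ?mulr1 ?mulr0.
Qed.

Lemma Expect_comp (V : finType) (Y : Omega -> V) (g : V -> R) :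
  Expect P (fun w => g (Y w)) = \sum_v g v * Prob P (fun w => Y w == v).
Proof.
rewrite /Expect (partition_big Y xpredT) //=; apply: eq_bigr => v _.
by rewrite /Prob big_distrr; apply: eq_bigr => w /eqP <-; rewrite mulrC.
Qed.

Lemma Expect_lin n (c : 'I_n -> R) (X : 'I_n -> Omega -> R) :
  Expect P (fun w => \sum_k c k * X k w) = \sum_k c k * Expect P (X k).
Proof.
rewrite /Expect; under eq_bigr do rewrite mulr_sumr.
rewrite exchange_big; apply: eq_bigr => k _; rewrite mulr_sumr.
by apply: eq_bigr => w _; rewrite mulrCA.
Qed.

Definition mutually_independent n (V : finType) (Y : 'I_n -> Omega -> V) : Prop :=
  forall F : {ffun 'I_n -> V},
    Prob P (fun w => [forall k, Y k w == F k]) = \prod_k Prob P (fun w => Y k w == F k).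

Lemma Expect_prod_indep n (V : finType) (Y : 'I_n -> Omega -> V) (g : 'I_n -> V -> R) :
  mutually_independent Y ->
  Expect P (fun w => \prod_k g k (Y k w)) = \prod_k Expect P (fun w => g k (Y k w)).
Proof.
move=> Y_indep; pose G (F : {ffun 'I_n -> V}) := \prod_k g k (F k).
transitivity (Expect P (fun w => G [ffun k => Y k w])).
  by apply: eq_bigr => w _; congr (_ * _); apply: eq_bigr => k _; rewrite ffunE.
under [RHS]eq_bigr => k _ do rewrite (Expect_comp (Y k) (g k)).
rewrite (Expect_comp (fun w => [ffun k => Y k w]) G) bigA_distr_bigA /=.
apply: eq_bigr => F _; rewrite big_split /=; congr (_ * _).
rewrite -Y_indep /Prob; apply: eq_bigl => w /=.
apply/eqP/forallP => [<- k|YF]; first by rewrite ffunE.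
by apply/ffunP => k; rewrite ffunE; apply/eqP.
Qed.

Hypothesis P_pmf : is_pmf P.

Lemma sum_Prob_eq1 (V : finType) (Y : Omega -> V) :
  \sum_v Prob P (fun w => Y w == v) = 1.
Proof. by case: P_pmf => _ <-; rewrite (partition_big Y xpredT). Qed.

Lemma Prob_ge0 (A : pred Omega) : 0 <= Prob P A.
Proof. by apply: sumr_ge0 => w _; case: P_pmf. Qed.

Lemma Prob_le1 (A : pred Omega) : Prob P A <= 1.
Proof.
case: P_pmf => P_ge0 <-; rewrite /Prob [X in _ <= X](bigID A) /= lerDl.
by apply: sumr_ge0.
Qed.

Lemma Expect_ge0 (X : Omega -> R) : (forall w, 0 <= X w) -> 0 <= Expect P X.
Proof. by case: P_pmf => P_ge0 _ X_ge0; apply: sumr_ge0 => w _; rewrite mulr_ge0. Qed.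

Lemma Prob_orb_le (A B : pred Omega) :
  Prob P (fun w => A w || B w) <= Prob P A + Prob P B.
Proof.
rewrite -!Expect_indicator /Expect -big_split /=; apply: ler_sum => w _.
case: P_pmf => P_ge0 _; rewrite -mulrDr ler_wpM2l //.
by case: (A w); case: (B w); rewrite /= ?(addr0, add0r, lerDl, ler01, lexx).
Qed.

Lemma chernoff_bound (X : Omega -> R) (eps mu : R) : 0 <= mu ->
  Prob P (fun w => eps <= X w) <=
  expR (- (mu * eps)) * Expect P (fun w => expR (mu * X w)).
Proof.
move=> mu_ge0; rewrite -Expect_indicator /Expect mulr_sumr; apply: ler_sum => w _.
case: P_pmf => P_ge0 _; rewrite mulrCA ler_wpM2l // -expRD.
case: (eps <= X w) / boolP => [eps_le|_]; last by rewrite expR_ge0.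
by rewrite -expR0 ler_expR addrC -mulrBr mulr_ge0 // subr_ge0.
Qed.

Lemma hoeffding_indicator (A : pred Omega) (h : R) :
  Expect P (fun w => expR (h * ((A w)%:R - Prob P A))) <= expR (h ^+ 2 / 8).
Proof.
have := Expect_indicator A; have : 0 <= Prob P A <= 1 by rewrite Prob_ge0 Prob_le1.
move: (Prob P A) => p p01 E_A; case: P_pmf => _ P1.
have -> : Expect P (fun w => expR (h * ((A w)%:R - p))) =
          expR (- (h * p)) * \sum_w P w +
          (expR (h * (1 - p)) - expR (- (h * p))) * Expect P (fun w => (A w)%:R).
  rewrite /Expect !mulr_sumr -big_split; apply: eq_bigr => w _ /=.
  by case: (A w); rewrite /= ?sub0r ?mulrN; ring.
rewrite P1 E_A [leLHS](_ : _ = (1 - p) * expR (- (h * p)) + p * expR (h * (1 - p))).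
  exact: hoeffding_bernoulli.
by ring.
Qed.

Lemma subgaussian_tail (X : Omega -> R) (s eps : R) : 0 < s -> 0 <= eps ->
  (forall mu, Expect P (fun w => expR (mu * X w)) <= expR (mu ^+ 2 * s / 8)) ->
  Prob P (fun w => eps <= `|X w|) <= 2 * expR (- (2 * eps ^+ 2 / s)).
Proof.
move=> s_gt0 eps_ge0 mgf_le.
have tail_le (Y : Omega -> R) :
    (forall mu, Expect P (fun w => expR (mu * Y w)) <= expR (mu ^+ 2 * s / 8)) ->
    Prob P (fun w => eps <= Y w) <= expR (- (2 * eps ^+ 2 / s)).
  pose mu := 4 * eps / s.
  have mu_ge0 : 0 <= mu by rewrite divr_ge0 ?mulr_ge0 // ltW.
  move=> mgfY; apply: le_trans (chernoff_bound Y eps mu_ge0) _.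
  apply: le_trans (ler_wpM2l (expR_ge0 _) (mgfY mu)) _.
  rewrite -expRD (_ : _ + _ = - (2 * eps ^+ 2 / s)) // /mu.
  have s_neq0 : s != 0 by rewrite gt_eqF.
  by field.
have -> : Prob P (fun w => eps <= `|X w|) =
          Prob P (fun w => (eps <= X w) || (eps <= - X w)).
  by apply: eq_bigl => w; rewrite ler_normr.
apply: le_trans (Prob_orb_le _ _) _; rewrite mulr_natl mulr2n.
apply: lerD; apply: tail_le => // mu.
by rewrite /Expect; under eq_bigr do rewrite mulrN -mulNr; rewrite -sqrrN; exact: mgf_le.
Qed.

Lemma hoeffding_indicators n (V : finType) (Y : 'I_n -> Omega -> V)
    (A : 'I_n -> pred V) (c : 'I_n -> R) (eps : R) :
  mutually_independent Y -> 0 <= eps -> 0 < \sum_k c k ^+ 2 ->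
  Prob P (fun w =>
    eps <= `|\sum_k c k * ((A k (Y k w))%:R - Prob P (fun w => A k (Y k w)))|)
  <= 2 * expR (- (2 * eps ^+ 2 / \sum_k c k ^+ 2)).
Proof.
move=> Y_indep eps_ge0 c2_gt0; apply: subgaussian_tail => // mu.
pose g k v := expR (mu * c k * ((A k v)%:R - Prob P (fun w => A k (Y k w)))).
rewrite [leLHS](_ : _ = Expect P (fun w => \prod_k g k (Y k w))); last first.
  by apply: eq_bigr => w _; rewrite mulr_sumr expR_sum; under eq_bigr do rewrite mulrA.
rewrite Expect_prod_indep // mulr_sumr mulr_suml expR_sum.
apply: ler_prod => k _; rewrite Expect_ge0 => [|w]; last exact: expR_ge0.
by rewrite -exprMn; exact: hoeffding_indicator.
Qed.

End FiniteProbability.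

Lemma card_perm_to (n : nat) (x y : 'I_n) :
  (#|[set σ : {perm 'I_n} | σ x == y]| * n)%N = n`!.
Proof.
have card_eq y' :
    #|[set σ : {perm 'I_n} | σ x == y']| = #|[set σ : {perm 'I_n} | σ x == y]|.
  rewrite -!sum1_card (reindex_inj (mulIg (tperm y y'))) /=; apply: eq_bigl => σ.
  rewrite !inE permM; apply/eqP/eqP => [|<-]; last exact: tpermL.
  by move/(congr1 (tperm y y')); rewrite tpermK tpermR.
rewrite -card_Sn -[#|{perm 'I_n}|]sum1_card.
rewrite (partition_big (fun σ : {perm 'I_n} => σ x) xpredT) //=.
rewrite (eq_bigr (fun _ => #|[set σ : {perm 'I_n} | σ x == y]|)) => [|y' _].
  by rewrite sum_nat_const card_ord mulnC.
by rewrite -(card_eq y') -sum1_card; apply: eq_bigl => σ; rewrite inE.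
Qed.

Lemma Prob_uniform_perm_hit (R : realType) (Omega : finType) (P : Omega -> R)
    (M : nat) (A : finType) (i : Omega -> A) (phi : Omega -> {perm 'I_M})
    (x : A -> 'I_M) (r : 'I_M) :
  is_pmf P ->
  (forall a σ, Prob P (fun w => (i w == a) && (phi w == σ))
               = Prob P (fun w => i w == a) / (M`!)%:R) ->
  Prob P (fun w => phi w (x (i w)) == r) = 1 / M%:R.
Proof.
move=> P_pmf phi_unif; have M_gt0 : (0 < M)%N by case: M r {x phi phi_unif} => [[]|].
have M_neq0 : M%:R != 0 :> R by rewrite pnatr_eq0 -lt0n.
have hits a : \sum_(σ : {perm 'I_M}) (σ (x a) == r)%:R = (M`!)%:R / M%:R :> R.
  rewrite -natr_sum -(card_perm_to (x a) r) natrM mulfK //; congr _%:R.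
  by rewrite -sum1_card [RHS]big_mkcond /=; apply: eq_bigr => σ _; rewrite inE; case: eqP.
rewrite -Expect_indicator.
rewrite (Expect_comp P (fun w => (i w, phi w)) (fun v => (v.2 (x v.1) == r)%:R)).
rewrite (eq_bigr (fun v : A * {perm 'I_M} =>
    (v.2 (x v.1) == r)%:R * (Prob P (fun w => i w == v.1) / (M`!)%:R))) => [|[a σ] _].
  rewrite -(pair_bigA _ (fun a (σ : {perm 'I_M}) =>
    (σ (x a) == r)%:R * (Prob P (fun w => i w == a) / (M`!)%:R))) /=.
  transitivity (\sum_a Prob P (fun w => i w == a) / M%:R).
    apply: eq_bigr => a _; rewrite -mulr_suml hits; field.
    by rewrite M_neq0 pnatr_eq0 -lt0n fact_gt0.
  by rewrite -mulr_suml (sum_Prob_eq1 P_pmf).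
by rewrite -(phi_unif a σ); congr (_ * _); apply: eq_bigl => w; rewrite xpair_eqE.
Qed.

Lemma mutually_independent_tnth (R : realType) (Omega : finType) (P : Omega -> R)
    (Z : eqType) (V : finType) (Y : Z -> Omega -> V) (zseq : seq Z) :
  uniq zseq ->
  (forall A : Z -> {set V},
      Prob P (fun w => all (fun z => Y z w \in A z) zseq)
      = \prod_(z <- zseq) Prob P (fun w => Y z w \in A z)) ->
  mutually_independent P (fun k => Y (tnth (in_tuple zseq) k)).
Proof.
move=> /(tuple_uniqP (in_tuple zseq)) zk_inj Y_indep F; set zk := tnth _ in zk_inj *.
pose A z := [set v | [forall k, (zk k == z) ==> (v == F k)]].
have A_zk k v : (v \in A (zk k)) = (v == F k).
  rewrite inE; apply/forallP/eqP => [/(_ k)|-> k']; first by rewrite eqxx => /eqP.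
  by apply/implyP => /eqP/zk_inj ->.
have := Y_indep A; rewrite (big_tnth _ _ zseq) -/zk => Y_indep_A.
transitivity (Prob P (fun w => all (fun z => Y z w \in A z) zseq)).
  apply: eq_bigl => w; rewrite -(forallb_tnth (fun z => Y z w \in A z) (in_tuple zseq)).
  by apply: eq_forallb => k; rewrite A_zk.
by rewrite Y_indep_A; apply: eq_bigr => k _; apply: eq_bigl => w; rewrite A_zk.
Qed.

Section DistinctSeeds.
Variables (Z : eqType) (T : nat) (zs : 'I_T -> Z).

Lemma distinct_seeds_uniq : uniq (distinct_seeds zs).
Proof. exact: undup_uniq. Qed.

Lemma mem_distinct_seeds t : zs t \in distinct_seeds zs.
Proof. by rewrite mem_undup map_f ?mem_enum. Qed.

Lemma sum_over_seeds (V : nmodType) (F : Z -> V) :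
  \sum_t F (zs t) = \sum_(z <- distinct_seeds zs) F z *+ nseed zs z.
Proof.
have nseedE z : F z *+ nseed zs z = \sum_(t | zs t == z) F (zs t).
  rewrite -sumr_const; apply: eq_big => t; first by rewrite inE.
  by rewrite inE => /eqP ->.
under [RHS]eq_bigr => z _ do rewrite nseedE big_mkcond.
rewrite exchange_big /=; apply: eq_bigr => t _.
rewrite (bigD1_seq (zs t)) ?mem_distinct_seeds ?distinct_seeds_uniq //= eqxx.
by rewrite big1 ?addr0 // => z; rewrite eq_sym => /negPf ->.
Qed.

Lemma S_T_gt0 : (0 < T)%N -> (0 < S_T zs)%N.
Proof.
move=> T_gt0; pose t0 := Ordinal T_gt0.
rewrite /S_T (bigD1_seq (zs t0)) ?mem_distinct_seeds ?distinct_seeds_uniq //=.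
by rewrite ltn_addr // expn_gt0 orbF; apply/card_gt0P; exists t0; rewrite inE.
Qed.

End DistinctSeeds.

Section QuantileMark.
Variables (R : realType) (M H T : nat) (Z : eqType) (s : 'I_H -> 'I_M) (zs : 'I_T -> Z).
Variables (Omega : finType) (P : Omega -> R).
Variables (i : Z -> Omega -> 'I_H) (phi : Z -> Omega -> {perm 'I_M}) (r : 'I_M).

Let seeds := distinct_seeds zs.
Let zk (k : 'I_(size seeds)) : Z := tnth (in_tuple seeds) k.
Let Y (k : 'I_(size seeds)) (w : Omega) := (i (zk k) w, phi (zk k) w).
Let hit (v : 'I_H * {perm 'I_M}) := v.2 (s v.1) == r.
Let weight (k : 'I_(size seeds)) : R := (nseed zs (zk k))%:R / T%:R.

Let pihat_weighted w : pihat R zs s i phi r w = \sum_k weight k * (hit (Y k w))%:R.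
Proof.
rewrite /pihat /target_bin (sum_over_seeds zs (fun z => (hit (i z w, phi z w))%:R : R)).
rewrite (big_tnth _ _ seeds) mulr_suml; apply: eq_bigr => k _.
by rewrite -[_ *+ nseed _ _]mulr_natl mulrAC.
Qed.

Hypothesis T_gt0 : (0 < T)%N.

Let sum_weight : \sum_k weight k = 1.
Proof.
have := sum_over_seeds zs (fun _ => 1 : R); rewrite sumr_const card_ord (big_tnth _ _ seeds).
by rewrite -mulr_suml => <-; rewrite divff // pnatr_eq0 -lt0n.
Qed.

Let sum_weight_sq : \sum_k weight k ^+ 2 = (S_T zs)%:R / T%:R ^+ 2.
Proof.
rewrite /S_T natr_sum (big_tnth _ _ seeds) mulr_suml; apply: eq_bigr => k _.
by rewrite expr_div_n natrX.
Qed.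

Hypothesis P_pmf : is_pmf P.
Hypothesis seeds_indep : forall A : Z -> {set 'I_H * {perm 'I_M}},
  Prob P (fun w => all (fun z => (i z w, phi z w) \in A z) (distinct_seeds zs))
  = \prod_(z <- distinct_seeds zs) Prob P (fun w => (i z w, phi z w) \in A z).
Hypothesis phi_uniform : forall z, z \in distinct_seeds zs ->
  forall (a : 'I_H) (sigma : {perm 'I_M}),
    Prob P (fun w => (i z w == a) && (phi z w == sigma))
    = Prob P (fun w => i z w == a) / (M`!)%:R.

Let Prob_hit k : Prob P (fun w => hit (Y k w)) = 1 / M%:R.
Proof. exact: Prob_uniform_perm_hit P_pmf (phi_uniform (mem_tnth k (in_tuple seeds))). Qed.

Let pihat_centered w :
  pihat R zs s i phi r w - 1 / M%:R =
  \sum_k weight k * ((hit (Y k w))%:R - Prob P (fun w => hit (Y k w))).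
Proof.
under [RHS]eq_bigr do rewrite Prob_hit mulrBr.
by rewrite sumrB -mulr_suml sum_weight (mul1r (1 / _)) pihat_weighted.
Qed.

Lemma Expect_pihat : Expect P (pihat R zs s i phi r) = 1 / M%:R.
Proof.
transitivity (Expect P (fun w => \sum_k weight k * (hit (Y k w))%:R)).
  by apply: eq_bigr => w _; rewrite pihat_weighted.
rewrite Expect_lin; under eq_bigr do rewrite Expect_indicator Prob_hit.
by rewrite -mulr_suml sum_weight mul1r.
Qed.

Lemma pihat_deviation eps : 0 < eps ->
  Prob P (fun w => eps <= `|pihat R zs s i phi r w - 1 / M%:R|)
  <= 2 * expR (- (2 * eps ^+ 2 * T%:R ^+ 2 / (S_T zs)%:R)).
Proof.
move=> eps_gt0.
have S_gt0 : 0 < (S_T zs)%:R :> R by rewrite ltr0n S_T_gt0.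
rewrite /Prob; under eq_bigl do rewrite pihat_centered; rewrite -/(Prob _ _).
apply: le_trans (hoeffding_indicators P_pmf (fun=> hit) _ (ltW eps_gt0) _) _.
- exact: (mutually_independent_tnth (Y := fun z w => (i z w, phi z w))
                                     (distinct_seeds_uniq zs) seeds_indep).
- by rewrite sum_weight_sq divr_gt0 // exprn_gt0 // ltr0n.
by rewrite sum_weight_sq invf_div mulrA.
Qed.

End QuantileMark.

Theorem proposition1 (R : realType) (M H T : nat) (Z : eqType)
  (s : 'I_H -> 'I_M) (zs : 'I_T -> Z)
  (Omega : finType) (P : Omega -> R)
  (i : Z -> Omega -> 'I_H) (phi : Z -> Omega -> {perm 'I_M}) :
  (0 < M)%N -> (0 < H)%N -> (0 < T)%N ->
  is_pmf P ->
  (* the pairs (i_z, phi_z), z in Z_T, are mutually independent *)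
  (forall A : Z -> {set 'I_H * {perm 'I_M}},
      Prob P (fun w => all (fun z => (i z w, phi z w) \in A z)
                           (distinct_seeds zs))
      = \prod_(z <- distinct_seeds zs)
          Prob P (fun w => (i z w, phi z w) \in A z)) ->
  (* each phi_z is uniform on permutations of [M] and independent of i_z *)
  (forall z, z \in distinct_seeds zs ->
     forall (a : 'I_H) (sigma : {perm 'I_M}),
       Prob P (fun w => (i z w == a) && (phi z w == sigma))
       = Prob P (fun w => i z w == a) / (M`!)%:R) ->
  forall r : 'I_M,
    Expect P (pihat R zs s i phi r) = 1 / M%:R /\
    (forall eps : R, 0 < eps ->
       Prob P (fun w => eps <= `|pihat R zs s i phi r w - 1 / M%:R|)
       <= 2 * expR (- (2 * eps ^+ 2 * T%:R ^+ 2 / (S_T zs)%:R)) /\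
       2 * expR (- (2 * eps ^+ 2 * T%:R ^+ 2 / (S_T zs)%:R))
       = 2 * expR (- (2 * eps ^+ 2 * T_eff R zs))).
Proof.
move=> _ _ T_gt0 P_pmf seeds_indep phi_uniform r; split.
  exact: Expect_pihat.
move=> eps eps_gt0; split; first exact: pihat_deviation.
by rewrite /T_eff !mulrA.
Qed.
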